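(* Let $N_{\mathbf u}, N_{\boldsymbol\mu}, N_t, s$ be positive integers. Let $\mathbb M\in\mathbb R^{N_{\mathbf u}\times N_{\mathbf u}}$ be a fixed mass matrix and $\mathbf r:\mathbb R^{N_{\mathbf u}}\times\mathbb R^{N_{\boldsymbol\mu}}\times\mathbb R\to\mathbb R^{N_{\mathbf u}}$ continuously differentiable. Let $(a_{ij})_{1\le i,j\le s}$, $(b_i)$, $(c_i)$ be the coefficients of an $s$-stage diagonally implicit Runge–Kutta (DIRK) scheme ($a_{ij}=0$ for $j>i$), let $\Delta t_1,\dots,\Delta t_{N_t}>0$, $t_0=0$, $t_n=t_{n-1}+\Delta t_n$. Fix $\boldsymbol\mu$ and let $\mathbf u^{(0)},\dots,\mathbf u^{(N_t)}$, $\mathbf k_i^{(n)}$ ($n=1,\dots,N_t$, $i=1,\dots,s$) be a time-periodic solution of the fully discrete equations $$\mathbf u^{(n)}=\mathbf u^{(n-1)}+\sum_{i=1}^s b_i\mathbf k_i^{(n)},\qquad \mathbb M\mathbf k_i^{(n)}=\Delta t_n\,\mathbf r\big(\mathbf u_i^{(n)},\boldsymbol\mu,t_{n-1}+c_i\Delta t_n\big),\qquad \mathbf u_i^{(n)}=\mathbf u^{(n-1)}+\sum_{j=1}^i a_{ij}\mathbf k_j^{(n)},$$ with $\mathbf u^{(0)}=\mathbf u^{(N_t)}$. Let $F$ be a continuously differentiable function of $(\mathbf u^{(0)},\dots,\mathbf u^{(N_t)},\mathbf k_1^{(1)},\dots,\mathbf k_s^{(N_t)},\boldsymbol\mu)$.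 Assume the Jacobian $\frac{\partial\mathbf u^{(N_t)}}{\partial\mathbf u_0}(\mathbf u^{(0)};\boldsymbol\mu)-\mathbf I$ of the time-periodicity residual is non-singular at this periodic solution. Then the linear system (a two-point boundary value problem) for the unknowns $\boldsymbol\lambda^{(0)},\dots,\boldsymbol\lambda^{(N_t)},\boldsymbol\kappa_1^{(1)},\dots,\boldsymbol\kappa_s^{(N_t)}\in\mathbb R^{N_{\mathbf u}}$, $$\boldsymbol\lambda^{(N_t)}=\boldsymbol\lambda^{(0)}+\frac{\partial F}{\partial\mathbf u^{(N_t)}}^T,$$ $$\boldsymbol\lambda^{(n-1)}=\boldsymbol\lambda^{(n)}+\frac{\partial F}{\partial\mathbf u^{(n-1)}}^T+\sum_{i=1}^s\Delta t_n\frac{\partial\mathbf r}{\partial\mathbf u}\big(\mathbf u_i^{(n)},\boldsymbol\mu,t_{n-1}+c_i\Delta t_n\big)^T\boldsymbol\kappa_i^{(n)},$$ $$\mathbb M^T\boldsymbol\kappa_i^{(n)}=\frac{\partial F}{\partial\mathbf k_i^{(n)}}^T+b_i\boldsymbol\lambda^{(n)}+\sum_{j=i}^s a_{ji}\Delta t_n\frac{\partial\mathbf r}{\partial\mathbf u}\big(\mathbf u_j^{(n)},\boldsymbol\mu,t_{n-1}+c_j\Delta t_n\big)^T\boldsymbol\kappa_j^{(n)},$$ for $n=1,\dots,N_t$, $i=1,\dots,s$ (all derivatives of $F$ evaluated at the periodic solution), has a solution, and this solution is unique.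
   Context: For $\mathbf u_0\in\mathbb R^{N_{\mathbf u}}$, $\mathbf u^{(N_t)}(\mathbf u_0;\boldsymbol\mu)$ denotes the state at step $N_t$ obtained by evolving the DIRK recursion above from the initial condition $\mathbf u^{(0)}=\mathbf u_0$ (without imposing periodicity), and $\frac{\partial\mathbf u^{(N_t)}}{\partial\mathbf u_0}$ is its Jacobian with respect to $\mathbf u_0$. It is assumed throughout that the DIRK stage equations and their linearizations are uniquely solvable along the periodic solution, i.e. the matrices $\mathbb M-a_{ii}\Delta t_n\frac{\partial\mathbf r}{\partial\mathbf u}(\mathbf u_i^{(n)},\boldsymbol\mu,t_{n-1}+c_i\Delta t_n)$ are non-singular for all $n,i$, so that the map $\mathbf u_0\mapsto\mathbf u^{(N_t)}(\mathbf u_0;\boldsymbol\mu)$ is differentiable near $\mathbf u^{(0)}$. *)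

From HB Require Import structures.
From mathcomp Require Import all_boot all_order all_algebra.
From mathcomp Require Import all_classical all_reals all_analysis.
Set Implicit Arguments. Unset Strict Implicit. Unset Printing Implicit Defensive.
Import Order.TTheory GRing.Theory Num.Theory.
Import numFieldNormedType.Exports.
Local Open Scope ring_scope.

Section Defs.
Variable R : realType.

Definition jac n m (f : 'cV[R]_n -> 'cV[R]_m) (x : 'cV[R]_n) : 'M[R]_(m, n) :=
  \matrix_(i, j) ('d f x (delta_mx j ord0)) i ord0.

Definition grad n (g : 'cV[R]_n -> R) (x : 'cV[R]_n) : 'cV[R]_n :=
  \col_j ('d g x (delta_mx j ord0)).

(* continuously differentiable: differentiable everywhere, with continuous
   directional derivatives x |-> Df(x) v for every v (finite dimensions) *)
Definition C1 (V W : normedModType R) (f : V -> W) : Prop :=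
  (forall x, differentiable f x) /\ (forall v, continuous (fun x => 'd f x v)).

Definition tgrid (dt : nat -> R) (n : nat) : R := \sum_(1 <= m < n.+1) dt m.

Definition stage Nu (a : nat -> nat -> R) (u : nat -> 'cV[R]_Nu)
  (k : nat -> nat -> 'cV[R]_Nu) (n i : nat) : 'cV[R]_Nu :=
  u n.-1 + \sum_(1 <= j < i.+1) a i j *: k n j.

Definition stime (c : nat -> R) (dt : nat -> R) (n i : nat) : R :=
  tgrid dt n.-1 + c i * dt n.

Definition dirk_sys Nu Nmu (Nt s : nat) (M : 'M[R]_Nu)
  (r : 'cV[R]_Nu -> 'cV[R]_Nmu -> R -> 'cV[R]_Nu)
  (a : nat -> nat -> R) (b c dt : nat -> R) (mu : 'cV[R]_Nmu)
  (u : nat -> 'cV[R]_Nu) (k : nat -> nat -> 'cV[R]_Nu) : Prop :=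
  (forall n, (1 <= n <= Nt)%N ->
     u n = u n.-1 + \sum_(1 <= i < s.+1) b i *: k n i) /\
  (forall n i, (1 <= n <= Nt)%N -> (1 <= i <= s)%N ->
     M *m k n i = dt n *: r (stage a u k n i) mu (stime c dt n i)).

Fixpoint dstate Nu (s : nat) (b : nat -> R) (u0 : 'cV[R]_Nu)
  (k : nat -> nat -> 'cV[R]_Nu) (n : nat) : 'cV[R]_Nu :=
  match n with
  | O => u0
  | m.+1 => dstate s b u0 k m + \sum_(1 <= i < s.+1) b i *: k m.+1 i
  end.

Definition packU Nu Nt (u : nat -> 'cV[R]_Nu) : 'M[R]_(Nu, Nt.+1) :=
  \matrix_(p, q) u (nat_of_ord q) p ord0.

(* packing of k_i^(n) (n = 1..Nt, i = 1..s) as the columns of a matrix,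
   k_i^(n) being column (n-1)*s + (i-1) *)
Definition packK Nu Nt s (k : nat -> nat -> 'cV[R]_Nu) : 'M[R]_(Nu, Nt * s) :=
  \matrix_(p, q) k ((q %/ s).+1)%N ((q %% s).+1)%N p ord0.

Definition upd Nu (u : nat -> 'cV[R]_Nu) (m : nat) (x : 'cV[R]_Nu) :=
  fun p => if p == m then x else u p.
Definition upd2 Nu (k : nat -> nat -> 'cV[R]_Nu) (n i : nat) (x : 'cV[R]_Nu) :=
  fun p q => if (p == n) && (q == i) then x else k p q.

End Defs.

From HB Require Import structures.
From mathcomp Require Import all_boot all_order all_algebra.
From mathcomp Require Import all_classical all_reals all_analysis.
From mathcomp Require Import zify.
Import Order.TTheory GRing.Theory Num.Theory.
Import numFieldNormedType.Exports.
Local Open Scope ring_scope.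
Set Implicit Arguments. Unset Strict Implicit.

(* The adjoint system is the transpose of the tangent (sensitivity) system of
   the scheme.  Differentiating the stage equations along the local branch of
   stage solutions u0 |-> u^(n)(u0) gives tangent stage equations with the
   Jacobians J_i of r; pairing them with a solution of the homogeneous adjoint
   equations yields lam^(n-1) . du^(n-1) = lam^(n) . du^(n), hence
   lam^(0) = P^T lam^(Nt) with P = du^(Nt)/du0.  For fixed n the adjoint stage
   equations are block upper triangular with the invertible diagonal blocks
   (M - a_ii dt_n J_i)^T, so every terminal value lam^(Nt) extends to exactly
   one backward sweep.  The difference of two periodic solutions solves the
   homogeneous periodic problem, where (P^T - I) lam^(Nt) = 0 forces
   everything to vanish; and since lam^(0) depends affinely on lam^(Nt) with
   linear part P^T, the periodicity condition can be met because P - I is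
   invertible. *)

Lemma trmx_mul_extl (R : pzRingType) m (x y : 'cV[R]_m) :
  (forall e : 'cV[R]_m, x^T *m e = y^T *m e) -> x = y.
Proof.
by move=> xy; apply/row_matrixP => i; apply: trmx_inj; rewrite !tr_row !colE.
Qed.

Lemma subr_add3 (V : zmodType) (x1 y1 z1 x2 y2 z2 : V) :
  (x1 + y1 + z1) - (x2 + y2 + z2) = (x1 - x2) + (y1 - y2) + (z1 - z2).
Proof. by rewrite opprD (addrACA (x1 + y1)) opprD (addrACA x1). Qed.

Lemma exchange_big_nat_triangular (V : nmodType) s (G : nat -> nat -> V) :
  \sum_(1 <= i < s.+1) \sum_(1 <= j < i.+1) G i j =
  \sum_(1 <= j < s.+1) \sum_(j <= i < s.+1) G i j.
Proof.
transitivity (\sum_(1 <= i < s.+1) \sum_(1 <= j < s.+1)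
                 (if (j <= i)%N then G i j else 0)).
  apply: eq_big_nat => i /andP[_ le_is].
  by rewrite (@big_nat_widen _ _ _ 1 i.+1 s.+1) // big_mkcond.
rewrite exchange_big_nat; apply: eq_big_nat => j /andP[le1j _].
by rewrite (@big_nat_widenl _ _ _ j 1 s.+1) // big_mkcond.
Qed.

Section ImplicitTriangularSystem.
Variables (R : comUnitRingType) (m : nat) (B : 'M[R]_m) (J : nat -> 'M[R]_m)
  (c : nat -> nat -> R).

Lemma triangular_system_solvable s (g : nat -> 'cV[R]_m) :
  (forall i, (1 <= i <= s)%N -> B - c i i *: J i \in unitmx) ->
  exists kap : nat -> 'cV[R]_m, forall i, (1 <= i <= s)%N ->
    B *m kap i = g i + \sum_(i <= j < s.+1) c j i *: (J j *m kap j).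
Proof.
elim: s g => [|s IH] g unit_diag; first by exists (fun=> 0) => i; lia.
set v := invmx (B - c s.+1 s.+1 *: J s.+1) *m g s.+1.
have [kap kap_eq] := IH (fun i => g i + c s.+1 i *: (J s.+1 *m v))
  (fun i Hi => unit_diag i (ltac:(lia))).
exists (fun i => if i == s.+1 then v else kap i) => i Hi.
have [->|ne_is] := eqVneq i s.+1.
  rewrite big_nat1 eqxx scalemxAl.
  rewrite -{1}[B](subrK (c s.+1 s.+1 *: J s.+1)) mulmxDl mulKVmx //.
  by apply: unit_diag; lia.
rewrite kap_eq; last by lia.
rewrite [in RHS]big_nat_recr /=; last by lia.
rewrite -addrA [c s.+1 i *: _ + _]addrC eqxx; congr (_ + (_ + _)).
by apply: eq_big_nat => j /andP[_ lt_js]; rewrite ltn_eqF.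
Qed.

Lemma triangular_system_homog_eq0 s (kap : nat -> 'cV[R]_m) :
  (forall i, (1 <= i <= s)%N -> B - c i i *: J i \in unitmx) ->
  (forall i, (1 <= i <= s)%N ->
    B *m kap i = \sum_(i <= j < s.+1) c j i *: (J j *m kap j)) ->
  forall i, (1 <= i <= s)%N -> kap i = 0.
Proof.
elim: s => [|s IH] unit_diag kap_eq i Hi; first by lia.
have kap_top : kap s.+1 = 0.
  have /eqP := kap_eq s.+1 (ltac:(lia)).
  rewrite big_nat1 scalemxAl -subr_eq0 -mulmxBl => /eqP top_eq.
  by rewrite -[kap _](mulKmx (unit_diag s.+1 _)) ?top_eq ?mulmx0 //; lia.
have [-> //|ne_is] := eqVneq i s.+1.
apply: IH => [j Hj|j Hj|]; [apply: unit_diag; lia| |lia].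
by rewrite kap_eq ?big_nat_recr /= ?kap_top ?mulmx0 ?scaler0 ?addr0 //; lia.
Qed.

End ImplicitTriangularSystem.

Section DirkAdjointStep.
Variables (R : comRingType) (m s : nat) (M : 'M[R]_m) (J : nat -> 'M[R]_m)
  (a : nat -> nat -> R) (b : nat -> R) (h : R).

Lemma dirk_adjoint_step_duality (d lam : 'cV[R]_m) (dk kap : nat -> 'cV[R]_m) :
  (forall i, (1 <= i <= s)%N ->
    M *m dk i = h *: (J i *m (d + \sum_(1 <= j < i.+1) a i j *: dk j))) ->
  (forall i, (1 <= i <= s)%N ->
    M^T *m kap i = b i *: lam
      + \sum_(i <= j < s.+1) (a j i * h) *: ((J j)^T *m kap j)) ->
  (lam + \sum_(1 <= i < s.+1) h *: ((J i)^T *m kap i))^T *m d =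
  lam^T *m (d + \sum_(1 <= i < s.+1) b i *: dk i).
Proof.
move=> tangent adjoint.
(* Pair the adjoint stage equation with dk i and the tangent one with kap i:
   the two triangular double sums of G cancel after exchanging summations. *)
pose G i j := (h * a i j) *: ((kap i)^T *m J i *m dk j).
have pair_stage i : (1 <= i < s.+1)%N -> lam^T *m (b i *: dk i) =
    h *: ((kap i)^T *m J i *m d)
    + \sum_(1 <= j < i.+1) G i j - \sum_(i <= j < s.+1) G j i.
  move=> Hi.
  have -> : lam^T *m (b i *: dk i) = (b i *: lam)^T *m dk i.
    by rewrite -scalemxAr linearZ /= scalemxAl.
  rewrite -[b i *: lam](addrK (\sum_(i <= j < s.+1)
    (a j i * h) *: ((J j)^T *m kap j))) -adjoint //.
  rewrite linearB /= mulmxBl trmx_mul trmxK -[_ *m M *m _]mulmxA tangent //.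
  rewrite -scalemxAr !mulmxDr scalerDr mulmxA !mulmx_sumr scaler_sumr.
  rewrite [in X in _ - X]raddf_sum /= mulmx_suml; congr (_ + _ - _).
    apply: eq_bigr => j _.
    by rewrite -!scalemxAr scalerA mulmxA.
  apply: eq_bigr => j _.
  by rewrite linearZ /= -scalemxAl trmx_mul trmxK mulrC.
rewrite linearD /= mulmxDl mulmxDr; congr (_ + _).
rewrite mulmx_sumr (eq_big_nat _ _ pair_stage) !big_split /= sumrN.
rewrite exchange_big_nat_triangular addrK raddf_sum /= mulmx_suml.
apply: eq_bigr => i _.
by rewrite linearZ /= -scalemxAl trmx_mul trmxK.
Qed.

End DirkAdjointStep.

Section Calculus.
Variable R : realType.

Lemma jac_mulmx n m (f : 'cV[R]_n -> 'cV[R]_m) x v : jac f x *m v = 'd f x v.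
Proof.
rewrite {2}(matrix_sum_delta v) linear_sum /=.
apply/matrixP => i j; rewrite !ord1 !mxE summxE.
by apply: eq_bigr => l _; rewrite big_ord1 linearZ /= !mxE mulrC.
Qed.

Lemma continuous_mulmx p n (A : 'M[R]_(p, n)) :
  continuous (fun x : 'cV[R]_n => A *m x).
Proof.
have -> : (fun x : 'cV[R]_n => A *m x) =
    (fun x => \sum_(j < n) x j ord0 *: col j A).
  apply/funext => x; apply/matrixP => i l; rewrite ord1 !mxE summxE.
  by apply: eq_bigr => j _; rewrite !mxE mulrC.
elim: (index_enum _) => [|j r IH] x.
  under eq_fun do rewrite big_nil.
  exact: cst_continuous.
under eq_fun do rewrite big_cons.
apply: (@continuousD _ _ _ (fun y => _) (fun y => _)); last exact: IH.
exact/continuousZr_tmp/coord_continuous.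
Qed.

Global Instance is_diff_mulmx p n (A : 'M[R]_(p, n)) (x : 'cV[R]_n) :
  is_diff x (fun y => A *m y) (fun y => A *m y).
Proof.
have Acont := continuous_mulmx (A := A).
split; first exact: (@linear_differentiable _ _ _ (mulmx A) x).
exact: (@diff_lin _ _ _ (mulmx A) x).
Qed.

Section NormedModules.
Variables V W : normedModType R.

Lemma is_diff_near_eq (f g df dg : V -> W) x :
  (\forall y \near x, f y = g y) -> is_diff x f df -> is_diff x g dg -> df = dg.
Proof.
move=> fg fx gx; apply/funext => v.
by rewrite -[df](diff_val (f := f)) -[dg](diff_val (f := g)) -!deriveE //;
  exact: near_eq_derive.
Qed.

Lemma is_diff_add_lincomb (I : eqType) (r : seq I) (c : I -> R)
    (f df : I -> V -> W) (g dg : V -> W) x :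
  is_diff x g dg -> (forall i, i \in r -> is_diff x (f i) (df i)) ->
  is_diff x (fun y => g y + \sum_(i <- r) c i *: f i y)
            (fun v => dg v + \sum_(i <- r) c i *: df i v).
Proof.
elim: r g dg => [|j r IH] g dg gx fx.
  have nil_lincomb (h : V -> W) (dh : I -> V -> W) :
      (fun y => h y + \sum_(i <- [::]) c i *: dh i y) = h.
    by apply/funext => y; rewrite big_nil addr0.
  by rewrite !nil_lincomb.
have cons_lincomb (h : V -> W) (dh : I -> V -> W) :
    (fun y => h y + \sum_(i <- j :: r) c i *: dh i y) =
    (fun y => (h + c j *: dh j) y + \sum_(i <- r) c i *: dh i y).
  by apply/funext => y; rewrite big_cons addrA.
rewrite !cons_lincomb; apply: IH => [|i ri]; last first.
  by apply: fx; rewrite inE ri orbT.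
have fjx := fx j (mem_head _ _).
exact: is_diffD.
Qed.
End NormedModules.

Lemma differentiable_partial1 (U V T W : normedModType R) (f : U * V * T -> W)
    y t x :
  differentiable f ((x, y), t) -> differentiable (fun x' => f ((x', y), t)) x.
Proof.
by move=> fx; apply: (@differentiable_comp _ _ _ _ (fun x' => ((x', y), t))).
Qed.
End Calculus.

Section DirkAdjoint.
Variables (R : realType) (Nu Nmu Nt s : nat) (M : 'M[R]_Nu)
  (r : 'cV[R]_Nu -> 'cV[R]_Nmu -> R -> 'cV[R]_Nu)
  (a : nat -> nat -> R) (b c dt : nat -> R)
  (mu : 'cV[R]_Nmu) (u : nat -> 'cV[R]_Nu) (k : nat -> nat -> 'cV[R]_Nu)
  (Kb : nat -> nat -> 'cV[R]_Nu -> 'cV[R]_Nu).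
Local Notation u0 := (u 0%N).

Hypothesis r_diff :
  forall p, differentiable
    (fun p : 'cV[R]_Nu * 'cV[R]_Nmu * R => r p.1.1 p.1.2 p.2) p.
Hypothesis dirk_u : dirk_sys Nt s M r a b c dt mu u k.
Hypothesis Kb_u0 : forall n i, (1 <= n <= Nt)%N -> (1 <= i <= s)%N ->
  Kb n i u0 = k n i.
Hypothesis Kb_diff : forall n i, (1 <= n <= Nt)%N -> (1 <= i <= s)%N ->
  differentiable (Kb n i) u0.
Hypothesis dirk_Kb_near : \forall x \near u0,
  dirk_sys Nt s M r a b c dt mu (dstate s b x (fun n i => Kb n i x))
    (fun n i => Kb n i x).

Definition flow n x := dstate s b x (fun m i => Kb m i x) n.
Definition tangent_stages (e : 'cV[R]_Nu) m i := 'd (Kb m i) u0 e.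
Definition tangent_state e := dstate s b e (tangent_stages e).
Definition stage_jac n i :=
  jac (fun v => r v mu (stime c dt n i)) (stage a u k n i).

Lemma flow_u0 n : (n <= Nt)%N -> flow n u0 = u n.
Proof.
elim: n => [//|n IH lt_nNt].
rewrite /flow /= -/(flow n u0) (IH (ltnW lt_nNt)).
rewrite [u n.+1](dirk_u.1 n.+1) /=; last by lia.
by congr (_ + _); apply: eq_big_nat => i Hi; rewrite Kb_u0 //; lia.
Qed.

Lemma is_diff_Kb n i : (1 <= n <= Nt)%N -> (1 <= i <= s)%N ->
  is_diff u0 (Kb n i) (fun e => tangent_stages e n i).
Proof. by move=> Hn Hi; split => //; exact: Kb_diff. Qed.

Lemma is_diff_stage_sum n l (w : nat -> R) : (1 <= n <= Nt)%N -> (l <= s)%N ->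
  is_diff u0 (flow n.-1) (tangent_state ^~ n.-1) ->
  is_diff u0 (fun x => flow n.-1 x + \sum_(1 <= j < l.+1) w j *: Kb n j x)
    (fun e => tangent_state e n.-1
              + \sum_(1 <= j < l.+1) w j *: tangent_stages e n j).
Proof.
move=> Hn le_ls flow_diff; apply: is_diff_add_lincomb => // j.
by rewrite mem_index_iota => Hj; apply: is_diff_Kb; lia.
Qed.

Lemma is_diff_flow n : (n <= Nt)%N -> is_diff u0 (flow n) (tangent_state ^~ n).
Proof.
elim: n => [_|n IH lt_nNt]; first exact: is_diff_id.
by apply: (is_diff_stage_sum (n := n.+1) b) => //; exact: IH (ltnW lt_nNt).
Qed.

Lemma tangent_stage_eq n i e : (1 <= n <= Nt)%N -> (1 <= i <= s)%N ->
  M *m tangent_stages e n i =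
  dt n *: (stage_jac n i *m stage a (tangent_state e) (tangent_stages e) n i).
Proof.
(* Differentiate at u0 the stage equation M k_i(x) = dt_n r(stage_i(x)),
   which holds for x near u0. *)
move=> Hn Hi.
pose rt v := r v mu (stime c dt n i).
pose stg x := flow n.-1 x + \sum_(1 <= j < i.+1) a i j *: Kb n j x.
have stg_u0 : stg u0 = stage a u k n i.
  rewrite /stg flow_u0; last by lia.
  by congr (_ + _); apply: eq_big_nat => j Hj; rewrite Kb_u0 //; lia.
have stg_diff :
    is_diff u0 stg (fun e => stage a (tangent_state e) (tangent_stages e) n i).
  apply: is_diff_stage_sum; [lia | lia | apply: is_diff_flow; lia].
have rt_diff : is_diff (stg u0) rt ('d rt (stg u0)).
  split => //.
  exact: (differentiable_partial1 (f := fun p => r p.1.1 p.1.2 p.2)).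
have lhs_diff : is_diff u0 (fun x => M *m Kb n i x)
    (fun e => M *m tangent_stages e n i).
  exact: (is_diff_comp (is_diff_Kb Hn Hi) (is_diff_mulmx M _)).
have rhs_diff : is_diff u0 (fun x => dt n *: rt (stg x))
    (fun e => dt n *:
       'd rt (stg u0) (stage a (tangent_state e) (tangent_stages e) n i)).
  exact: (is_diffZ (dt n) (is_diff_comp stg_diff rt_diff)).
have near_eq : \forall x \near u0, M *m Kb n i x = dt n *: rt (stg x).
  by apply: filterS dirk_Kb_near => x [_ stages]; exact: stages.
have := congr1 (fun f => f e) (is_diff_near_eq near_eq lhs_diff rhs_diff).
by move=> /= ->; rewrite -jac_mulmx stg_u0.
Qed.

Definition adjoint_step (gu : nat -> 'cV[R]_Nu) (gk : nat -> nat -> 'cV[R]_Nu)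
    (lam : nat -> 'cV[R]_Nu) (kap : nat -> nat -> 'cV[R]_Nu) n :=
  lam n.-1 = lam n + gu n.-1
             + \sum_(1 <= i < s.+1) dt n *: ((stage_jac n i)^T *m kap n i)
  /\ forall i, (1 <= i <= s)%N ->
       M^T *m kap n i = gk n i + b i *: lam n
         + \sum_(i <= j < s.+1) (a j i * dt n) *: ((stage_jac n j)^T *m kap n j).

Definition adjoint_sweep gu gk lam kap :=
  forall n, (1 <= n <= Nt)%N -> adjoint_step gu gk lam kap n.

Local Notation homog_adjoint_sweep := (adjoint_sweep (fun=> 0) (fun _ _ => 0)).

Lemma homog_adjoint_duality lam kap e : homog_adjoint_sweep lam kap ->
  forall n, (n <= Nt)%N -> (lam 0%N)^T *m e = (lam n)^T *m tangent_state e n.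
Proof.
move=> sweep; elim=> [//|n IH lt_nNt].
have [state stages] := sweep n.+1 (ltac:(lia)).
rewrite IH ?(ltnW lt_nNt) // [lam n]state addr0.
apply: (dirk_adjoint_step_duality (M := M)) => i Hi.
  by apply: tangent_stage_eq; lia.
by rewrite stages // add0r.
Qed.

Lemma homog_adjoint_transport lam kap : homog_adjoint_sweep lam kap ->
  lam 0%N = (jac (flow Nt) u0)^T *m lam Nt.
Proof.
move=> sweep; apply: trmx_mul_extl => e.
have flow_diff := is_diff_flow (leqnn Nt).
rewrite (homog_adjoint_duality e sweep (leqnn Nt)) trmx_mul trmxK -mulmxA.
by rewrite jac_mulmx diff_val.
Qed.

Hypothesis stage_unit : forall n i, (1 <= n <= Nt)%N -> (1 <= i <= s)%N ->
  M - (a i i * dt n) *: stage_jac n i \in unitmx.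
Hypothesis periodic_unit : jac (flow Nt) u0 - 1%:M \in unitmx.

Lemma adjoint_stage_unit n i : (1 <= n <= Nt)%N -> (1 <= i <= s)%N ->
  M^T - (a i i * dt n) *: (stage_jac n i)^T \in unitmx.
Proof. by move=> Hn Hi; rewrite -linearZ -linearB unitmx_tr stage_unit. Qed.

Lemma homog_adjoint_step_eq0 lam kap n : (1 <= n <= Nt)%N ->
  adjoint_step (fun=> 0) (fun _ _ => 0) lam kap n -> lam n = 0 ->
  lam n.-1 = 0 /\ forall i, (1 <= i <= s)%N -> kap n i = 0.
Proof.
move=> Hn [state stages] lam_n0.
have kap0 : forall i, (1 <= i <= s)%N -> kap n i = 0.
  apply: (triangular_system_homog_eq0 (B := M^T) (J := fun j => (stage_jac n j)^T)
    (c := fun j i => a j i * dt n)) => i Hi; first exact: adjoint_stage_unit.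
  by rewrite stages // lam_n0 scaler0 !add0r.
split=> //; rewrite state lam_n0 !add0r big_nat big1 // => i Hi.
by rewrite kap0 ?mulmx0 ?scaler0.
Qed.

Lemma homog_periodic_adjoint_eq0 lam kap : homog_adjoint_sweep lam kap ->
  lam Nt = lam 0%N ->
  (forall n, (n <= Nt)%N -> lam n = 0) /\
  (forall n i, (1 <= n <= Nt)%N -> (1 <= i <= s)%N -> kap n i = 0).
Proof.
move=> sweep periodic.
have lam_Nt0 : lam Nt = 0.
  have unitP := periodic_unit; rewrite -unitmx_tr in unitP.
  rewrite -[lam Nt](mulKmx unitP) linearB /= trmx1 mulmxBl mul1mx.
  by rewrite -(homog_adjoint_transport sweep) periodic subrr mulmx0.
have lam_eq0 m : (m <= Nt)%N -> lam (Nt - m)%N = 0.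
  elim: m => [_|m IH lt_mNt]; first by rewrite subn0.
  have Hn : (1 <= Nt - m <= Nt)%N by lia.
  have [<- _] := homog_adjoint_step_eq0 Hn (sweep _ Hn) (IH (ltnW lt_mNt)).
  by congr lam; lia.
have lam0 n : (n <= Nt)%N -> lam n = 0.
  by move=> le_nNt; rewrite -(subKn le_nNt); apply: lam_eq0; exact: leq_subr.
split=> [//|n i Hn].
have [_ kap0] := homog_adjoint_step_eq0 Hn (sweep _ Hn) (lam0 n (ltac:(lia))).
exact: kap0.
Qed.

Lemma adjoint_sweepB gu gk lam1 kap1 lam2 kap2 :
  adjoint_sweep gu gk lam1 kap1 -> adjoint_sweep gu gk lam2 kap2 ->
  homog_adjoint_sweep (fun n => lam1 n - lam2 n) (fun n i => kap1 n i - kap2 n i).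
Proof.
move=> sweep1 sweep2 n Hn.
have [state1 stages1] := sweep1 n Hn; have [state2 stages2] := sweep2 n Hn.
split=> [|i Hi].
  rewrite state1 state2 subr_add3 subrr -sumrB.
  by congr (_ + _); apply: eq_bigr => i _; rewrite mulmxBr scalerBr.
rewrite mulmxBr stages1 // stages2 // subr_add3 subrr scalerBr -sumrB.
by congr (_ + _); apply: eq_bigr => j _; rewrite mulmxBr scalerBr.
Qed.

Lemma adjoint_sweep_from_terminal gu gk x :
  exists lam kap, lam Nt = x /\ adjoint_sweep gu gk lam kap.
Proof.
suff sweep_top m : (m <= Nt)%N -> exists lam kap, lam Nt = x /\
    forall n, (Nt - m < n <= Nt)%N -> adjoint_step gu gk lam kap n.
  have [lam [kap [lamNt sweep]]] := sweep_top Nt (leqnn Nt).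
  by exists lam, kap; split=> // n Hn; apply: sweep; lia.
elim: m => [_|m IH lt_mNt].
  by exists (fun=> x), (fun _ _ => 0); split=> // n; lia.
have [lam [kap [lamNt sweep]]] := IH (ltnW lt_mNt).
(* n0 is kept opaque, so that lia reasons with n0E only. *)
have [n0 n0E] : {n0 | n0 = (Nt - m)%N} by exists (Nt - m)%N.
have Hn0 : (1 <= n0 <= Nt)%N by lia.
have [kap0 stages0] := triangular_system_solvable (B := M^T)
  (J := fun j => (stage_jac n0 j)^T) (c := fun j i => a j i * dt n0)
  (fun i => gk n0 i + b i *: lam n0)
  (fun i Hi => adjoint_stage_unit Hn0 Hi).
exists (upd lam n0.-1
  (lam n0 + gu n0.-1
   + \sum_(1 <= i < s.+1) dt n0 *: ((stage_jac n0 i)^T *m kap0 i))).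
exists (fun p => if p == n0 then kap0 else kap p).
split=> [|n Hn]; first by rewrite /upd ifN_eq //; lia.
rewrite /adjoint_step /upd.
have [->|ne_nn0] := eqVneq n n0.
  by rewrite eqxx ifN_eq; [split=> // i Hi; rewrite stages0 | lia].
rewrite !ifN_eq; [|lia|lia].
by apply: sweep; lia.
Qed.

Lemma adjoint_sweep_periodic_exists gu gk :
  exists lam kap, adjoint_sweep gu gk lam kap /\ lam Nt = lam 0%N + gu Nt.
Proof.
pose P := jac (flow Nt) u0.
have [lam0 [kap0 [lam0_Nt sweep0]]] := adjoint_sweep_from_terminal gu gk 0.
pose x := invmx (P - 1%:M)^T *m - (lam0 0%N + gu Nt).
have [lam [kap [lam_Nt sweep]]] := adjoint_sweep_from_terminal gu gk x.
exists lam, kap; split=> //.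
have lam_0 : lam 0%N = P^T *m x + lam0 0%N.
  have := homog_adjoint_transport (adjoint_sweepB sweep sweep0).
  by rewrite lam_Nt lam0_Nt subr0 => <-; rewrite subrK.
have unitP : (P - 1%:M)^T \in unitmx by rewrite unitmx_tr.
have := mulKVmx unitP (- (lam0 0%N + gu Nt)).
rewrite -/x linearB /= trmx1 mulmxBl mul1mx => fixed_x.
rewrite lam_Nt lam_0 -addrA -[lam0 0%N + gu Nt]opprK -fixed_x.
by rewrite opprB addrC subrK.
Qed.

Lemma adjoint_sweep_periodic_unique gu gk lam1 kap1 lam2 kap2 :
  adjoint_sweep gu gk lam1 kap1 -> lam1 Nt = lam1 0%N + gu Nt ->
  adjoint_sweep gu gk lam2 kap2 -> lam2 Nt = lam2 0%N + gu Nt ->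
  (forall n, (n <= Nt)%N -> lam1 n = lam2 n) /\
  (forall n i, (1 <= n <= Nt)%N -> (1 <= i <= s)%N -> kap1 n i = kap2 n i).
Proof.
move=> sweep1 periodic1 sweep2 periodic2.
have periodicB : lam1 Nt - lam2 Nt = lam1 0%N - lam2 0%N.
  by rewrite periodic1 periodic2 opprD (addrACA (lam1 0%N)) subrr addr0.
have [lam_eq kap_eq] :=
  homog_periodic_adjoint_eq0 (adjoint_sweepB sweep1 sweep2) periodicB.
by split=> [n ? | n i ? ?]; apply/eqP; rewrite -subr_eq0; apply/eqP;
  [exact: lam_eq | exact: kap_eq].
Qed.

End DirkAdjoint.

Unset Implicit Arguments. Set Strict Implicit.

Theorem mainTheorem1 (R : realType) (Nu Nmu Nt s : nat)
  (HNu : (0 < Nu)%N) (HNmu : (0 < Nmu)%N) (HNt : (0 < Nt)%N) (Hs : (0 < s)%N)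
  (M : 'M[R]_Nu) (r : 'cV[R]_Nu -> 'cV[R]_Nmu -> R -> 'cV[R]_Nu)
  (a : nat -> nat -> R) (b c dt : nat -> R)
  (mu : 'cV[R]_Nmu) (u : nat -> 'cV[R]_Nu) (k : nat -> nat -> 'cV[R]_Nu)
  (F : 'M[R]_(Nu, Nt.+1) -> 'M[R]_(Nu, Nt * s) -> 'cV[R]_Nmu -> R) :
  (* r continuously differentiable *)
  C1 (fun p : 'cV[R]_Nu * 'cV[R]_Nmu * R => r p.1.1 p.1.2 p.2) ->
  (* DIRK: a_ij = 0 for j > i *)
  (forall i j, (1 <= i <= s)%N -> (i < j <= s)%N -> a i j = 0) ->
  (* positive time steps *)
  (forall n, (1 <= n <= Nt)%N -> 0 < dt n) ->
  (* time-periodic solution of the fully discrete equations *)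
  dirk_sys Nt s M r a b c dt mu u k ->
  u 0%N = u Nt ->
  (* F continuously differentiable *)
  C1 (fun p : 'M[R]_(Nu, Nt.+1) * 'M[R]_(Nu, Nt * s) * 'cV[R]_Nmu =>
        F p.1.1 p.1.2 p.2) ->
  (* standing assumption: the linearized stage matrices are non-singular *)
  (forall n i, (1 <= n <= Nt)%N -> (1 <= i <= s)%N ->
     M - (a i i * dt n) *: jac (fun v => r v mu (stime c dt n i)) (stage a u k n i)
       \in unitmx) ->
  (* d u^(Nt)/d u_0 - I non-singular, where u_0 |-> u^(Nt)(u_0; mu) is the map
     obtained by evolving the DIRK recursion from u_0, along the local branch
     of stage solutions through the periodic solution *)
  (exists Kb : nat -> nat -> 'cV[R]_Nu -> 'cV[R]_Nu,
     (forall n i, (1 <= n <= Nt)%N -> (1 <= i <= s)%N ->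
        Kb n i (u 0%N) = k n i /\ differentiable (Kb n i) (u 0%N)) /\
     (\forall u0 \near u 0%N,
        dirk_sys Nt s M r a b c dt mu
          (dstate s b u0 (fun n i => Kb n i u0)) (fun n i => Kb n i u0)) /\
     jac (fun u0 => dstate s b u0 (fun n i => Kb n i u0) Nt) (u 0%N) - 1%:M
       \in unitmx) ->
  let Jr n i := jac (fun v => r v mu (stime c dt n i)) (stage a u k n i) in
  let gU m := grad (fun x => F (packU Nt (upd u m x)) (packK Nt s k) mu) (u m) in
  let gK n i :=
    grad (fun x => F (packU Nt u) (packK Nt s (upd2 k n i x)) mu) (k n i) in
  let adj (lam : nat -> 'cV[R]_Nu) (kap : nat -> nat -> 'cV[R]_Nu) :=
    [/\ lam Nt = lam 0%N + gU Nt,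
        (forall n, (1 <= n <= Nt)%N ->
           lam n.-1 = lam n + gU n.-1
                      + \sum_(1 <= i < s.+1) dt n *: ((Jr n i)^T *m kap n i)) &
        (forall n i, (1 <= n <= Nt)%N -> (1 <= i <= s)%N ->
           M^T *m kap n i = gK n i + b i *: lam n
             + \sum_(i <= j < s.+1) (a j i * dt n) *: ((Jr n j)^T *m kap n j))] in
  exists lam kap, adj lam kap /\
    forall lam' kap', adj lam' kap' ->
      (forall n, (n <= Nt)%N -> lam' n = lam n) /\
      (forall n i, (1 <= n <= Nt)%N -> (1 <= i <= s)%N -> kap' n i = kap n i).
Proof.
move=> [r_diff _] _ _ dirk_u _ _ stage_unit.
move=> [Kb [Kb_u0 [dirk_Kb_near periodic_unit]]] Jr gU gK adj.
have Kb_eq n i Hn Hi := (Kb_u0 n i Hn Hi).1.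
have Kb_diff n i Hn Hi := (Kb_u0 n i Hn Hi).2.
have [lam [kap [sweep periodic]]] := adjoint_sweep_periodic_exists r_diff dirk_u
  Kb_eq Kb_diff dirk_Kb_near stage_unit periodic_unit gU gK.
exists lam, kap; split.
  split=> // [n Hn | n i Hn Hi]; have [state stages] := sweep n Hn;
    [exact: state | exact: stages].
move=> lam' kap' [periodic' state' stages'].
apply: (adjoint_sweep_periodic_unique r_diff dirk_u Kb_eq Kb_diff dirk_Kb_near
  stage_unit periodic_unit _ periodic' sweep periodic) => n Hn.
by split=> [|i Hi]; [apply: state' | apply: stages'].
Qed.
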